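(* Let $\Sigma 2$ be the Sierpiński space and $\Sigma\mathbb{N}$ the natural numbers with the Scott topology of the usual order (which is $S^{\ast}$-well-filtered). Then the function space $[\Sigma 2,\Sigma\mathbb{N}]$ with the Isbell topology is not weak well-filtered, hence not $S^{\ast}$-well-filtered. Thus $Y$ being $S^{\ast}$-well-filtered does not imply that $[X,Y]$ is $S^{\ast}$-well-filtered for nonempty $T_0$-spaces $X$.
   Context: $\Sigma 2$ is the two-element chain $0<1$ with its Scott topology (open sets $\emptyset,\{1\},\{0,1\}$). $[X,Y]$ denotes the set of continuous maps $X\to Y$ with the Isbell topology, generated by the subbasic sets $N(H\leftarrow V)=\{f\mid f^{-1}(V)\in H\}$ where $H$ is a Scott open subset of the complete lattice $\mathcal{O}(X)$ of open sets of $X$ and $V$ is open in $Y$. For a space $Z$, ${\uparrow}$ is taken in the specialization order ($x\le y$ iff $x\in cl\{y\}$); $K(Z)$ is the set of nonempty compact saturated (= upper) subsets; a family in $K(Z)$ is filtered if any two members contain a common member. $Z$ is weak well-filtered if for every filtered $\{K_i\}\subseteq K(Z)$ and nonempty open $U$, $\bigcap_i K_i\subseteq U$ implies $K_i\subseteq U$ for some $i$; $Z$ is $S^{\ast}$-well-filtered if for every filtered $\{K_i\}\subseteq K(Z)$, $G\in K(Z)$ and nonempty open $U$, $\bigcap_i K_i\cap G\subseteq U$ implies $K_i\cap G\subseteq U$ for some $i$. *)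

From Stdlib Require Import List Arith.


Inductive generated {T : Type} (S : (T -> Prop) -> Prop) : (T -> Prop) -> Prop :=
  | g_sub U : S U -> generated S U
  | g_full : generated S (fun _ => True)
  | g_inter U V : generated S U -> generated S V -> generated S (fun x => U x /\ V x)
  | g_union (F : (T -> Prop) -> Prop) :
      (forall U, F U -> generated S U) -> generated S (fun x => exists U, F U /\ U x)
  | g_ext U V : generated S U -> (forall x, U x <-> V x) -> generated S V.

Definition is_ub {T} (le : T -> T -> Prop) (D : T -> Prop) (u : T) :=
  forall d, D d -> le d u.
Definition is_sup {T} (le : T -> T -> Prop) (D : T -> Prop) (s : T) :=
  is_ub le D s /\ forall u, is_ub le D u -> le s u.
Definition directed {T} (le : T -> T -> Prop) (D : T -> Prop) :=
  (exists d, D d) /\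
  forall a b, D a -> D b -> exists c, D c /\ le a c /\ le b c.
Definition scott_open {T} (le : T -> T -> Prop) (U : T -> Prop) :=
  (forall x y, U x -> le x y -> U y) /\
  forall D s, directed le D -> is_sup le D s -> U s -> exists d, D d /\ U d.

(** Sigma 2 : the chain 0 < 1 (false < true) with its Scott topology. *)
Definition le2 (a b : bool) : Prop := implb a b = true.
Definition Sigma2_open : (bool -> Prop) -> Prop := scott_open le2.

Definition SigmaN_open : (nat -> Prop) -> Prop := scott_open le.

Definition continuous {X Y} (OX : (X -> Prop) -> Prop) (OY : (Y -> Prop) -> Prop)
  (f : X -> Y) := forall V, OY V -> OX (fun x => V (f x)).

Definition opens_of {X} (OX : (X -> Prop) -> Prop) := { U : X -> Prop | OX U }.
Definition opens_le {X} (OX : (X -> Prop) -> Prop) (U V : opens_of OX) : Prop :=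
  forall x, proj1_sig U x -> proj1_sig V x.

Definition cmap {X Y} (OX : (X -> Prop) -> Prop) (OY : (Y -> Prop) -> Prop) :=
  { f : X -> Y | continuous OX OY f }.

Definition isbell_subbasic {X Y} (OX : (X -> Prop) -> Prop) (OY : (Y -> Prop) -> Prop)
  (W : cmap OX OY -> Prop) : Prop :=
  exists (H : opens_of OX -> Prop) (V : Y -> Prop),
    scott_open (@opens_le X OX) H /\ OY V /\
    forall f : cmap OX OY,
      W f <-> exists p : OX (fun x => V (proj1_sig f x)),
                H (exist _ (fun x => V (proj1_sig f x)) p).

Definition isbell_open {X Y} (OX : (X -> Prop) -> Prop) (OY : (Y -> Prop) -> Prop) :
  (cmap OX OY -> Prop) -> Prop := generated (@isbell_subbasic X Y OX OY).

Definition spec_le {Z} (O : (Z -> Prop) -> Prop) (x y : Z) : Prop :=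
  forall U, O U -> U x -> U y.   (* x \in cl{y} *)
Definition saturated {Z} (O : (Z -> Prop) -> Prop) (K : Z -> Prop) :=
  forall x y, K x -> spec_le O x y -> K y.
Definition compact {Z} (O : (Z -> Prop) -> Prop) (K : Z -> Prop) :=
  forall F : (Z -> Prop) -> Prop,
    (forall U, F U -> O U) ->
    (forall x, K x -> exists U, F U /\ U x) ->
    exists l : list (Z -> Prop),
      (forall U, In U l -> F U) /\ (forall x, K x -> exists U, In U l /\ U x).
Definition KZ {Z} (O : (Z -> Prop) -> Prop) (K : Z -> Prop) :=
  (exists x, K x) /\ compact O K /\ saturated O K.

Definition filtered_fam {Z} (Fam : (Z -> Prop) -> Prop) :=
  (exists K, Fam K) /\
  forall K1 K2, Fam K1 -> Fam K2 ->
    exists K3, Fam K3 /\ (forall x, K3 x -> K1 x) /\ (forall x, K3 x -> K2 x).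

Definition weak_well_filtered {Z} (O : (Z -> Prop) -> Prop) :=
  forall Fam : (Z -> Prop) -> Prop,
    (forall K, Fam K -> KZ O K) -> filtered_fam Fam ->
    forall U, O U -> (exists x, U x) ->
      (forall x, (forall K, Fam K -> K x) -> U x) ->
      exists K, Fam K /\ forall x, K x -> U x.

Definition S_star_well_filtered {Z} (O : (Z -> Prop) -> Prop) :=
  forall Fam : (Z -> Prop) -> Prop,
    (forall K, Fam K -> KZ O K) -> filtered_fam Fam ->
    forall G, KZ O G ->
    forall U, O U -> (exists x, U x) ->
      (forall x, (forall K, Fam K -> K x) -> G x -> U x) ->
      exists K, Fam K /\ forall x, K x -> G x -> U x.

(* In the Isbell topology on [Σ2, ΣN] every open set is upper in the pointwise
   order, so K_n = {f | n <= f 1} is compact saturated: it has the least element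
   (0 |-> 0, 1 |-> n).  The K_n form a chain with empty intersection, yet none of
   them lies in the nonempty open set {f | 1 <= f 0}, since each contains the map
   (0 |-> 0, 1 |-> n).  Taking G to be the whole space, which has the least
   element (0 |-> 0, 1 |-> 0), transfers this to S*-well-filteredness.
   In ΣN a nonempty Scott open set contains an up-set {k | u <= k}; each of the
   finitely many points below u outside the intersection of a filtered family
   is excluded by one member, and filteredness excludes them all at once. *)

From Stdlib Require Import List Arith.
From Stdlib Require Import Classical Lia.

Lemma scott_open_up {T} (le : T -> T -> Prop) U x y :
  scott_open le U -> U x -> le x y -> U y.
Proof. intros [Hup _]; exact (Hup x y). Qed.

Lemma spec_le_scott {T} (le : T -> T -> Prop) x y : le x y -> spec_le (scott_open le) x y.
Proof. intros Hxy U HU Ux; exact (scott_open_up le U x y HU Ux Hxy). Qed.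

Lemma scott_open_union {T} (le : T -> T -> Prop) (F : (T -> Prop) -> Prop) :
  (forall U, F U -> scott_open le U) -> scott_open le (fun x => exists U, F U /\ U x).
Proof.
  intros HF; split.
  - intros x y [U [FU Ux]] Hxy. exists U; split; [exact FU|].
    exact (scott_open_up le U x y (HF U FU) Ux Hxy).
  - intros D s HD Hs [U [FU Us]].
    destruct (proj2 (HF U FU) D s HD Hs Us) as [d [Dd Ud]].
    exists d; split; [exact Dd|]. exists U; auto.
Qed.

Lemma open_saturated {Z} (O : (Z -> Prop) -> Prop) U : O U -> saturated O U.
Proof. intros HU x y Ux Hxy; exact (Hxy U HU Ux). Qed.

Lemma compact_of_least {Z} (O : (Z -> Prop) -> Prop) (K : Z -> Prop) c :
  K c -> (forall y, K y -> spec_le O c y) -> compact O K.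
Proof.
  intros Kc Hleast F HFo Hcov. destruct (Hcov c Kc) as [U [FU Uc]].
  exists (U :: nil). split.
  - intros U' [<-|[]]; exact FU.
  - intros y Ky. exists U; split; [left; reflexivity|].
    exact (Hleast y Ky U (HFo U FU) Uc).
Qed.

Lemma KZ_of_least {Z} (O : (Z -> Prop) -> Prop) (K : Z -> Prop) c :
  K c -> (forall y, K y -> spec_le O c y) -> saturated O K -> KZ O K.
Proof.
  intros Kc Hleast Hsat. split; [exists c; exact Kc|].
  split; [exact (compact_of_least O K c Kc Hleast)|exact Hsat].
Qed.

Lemma S_star_well_filtered_weak {Z} (O : (Z -> Prop) -> Prop) :
  KZ O (fun _ => True) -> S_star_well_filtered O -> weak_well_filtered O.
Proof.
  intros HT Hs Fam HK Hf U HU Hne Hint.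
  destruct (Hs Fam HK Hf (fun _ => True) HT U HU Hne (fun x Hx _ => Hint x Hx))
    as [K [FK HKU]].
  exists K; split; [exact FK|]. intros x Kx; exact (HKU x Kx I).
Qed.

Section Isbell.

Variables (X Y : Type) (OX : (X -> Prop) -> Prop) (OY : (Y -> Prop) -> Prop).

Hypothesis OX_union : forall F : (X -> Prop) -> Prop,
  (forall U, F U -> OX U) -> OX (fun x => exists U, F U /\ U x).

(* The supremum of a directed family in O(X) is its union. *)
Lemma point_filter_scott_open (t : X) :
  scott_open (@opens_le X OX) (fun W => proj1_sig W t).
Proof.
  split; [intros W1 W2 W1t Hle; exact (Hle t W1t)|].
  intros D s _ [_ Hleast] st.
  set (F := fun U : X -> Prop => exists d, D d /\ proj1_sig d = U).
  assert (HF : OX (fun x => exists U, F U /\ U x)).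
  { apply OX_union. intros U [d [_ <-]]. exact (proj2_sig d). }
  destruct (Hleast (exist _ _ HF)) with t as [U [[d [Dd <-]] dt]].
  - intros d Dd x dx. exists (proj1_sig d); split; [exists d; auto|exact dx].
  - exact st.
  - exists d; auto.
Qed.

Lemma isbell_open_eval (t : X) V :
  OY V -> isbell_open OX OY (fun f : cmap OX OY => V (proj1_sig f t)).
Proof.
  intros HV. apply g_sub.
  exists (fun W => proj1_sig W t), V.
  split; [apply point_filter_scott_open|]. split; [exact HV|].
  intros f; split.
  - intros Vft. exists (proj2_sig f V HV). exact Vft.
  - intros [p Vft]. exact Vft.
Qed.

End Isbell.

Lemma isbell_open_upper {X Y} (OX : (X -> Prop) -> Prop) (OY : (Y -> Prop) -> Prop) W :
  isbell_open OX OY W ->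
  forall f g, W f -> (forall x, spec_le OY (proj1_sig f x) (proj1_sig g x)) -> W g.
Proof.
  induction 1 as [W [H [V [HH [HV Hiff]]]]| |U V _ IHU _ IHV|F _ IHF|U V _ IH HUV];
    intros f g Wf Hle.
  - apply Hiff in Wf. destruct Wf as [p Hp]. apply Hiff.
    exists (proj2_sig g V HV). apply (proj1 HH) with (exist _ _ p); [exact Hp|].
    intros x Vfx. exact (Hle x V HV Vfx).
  - exact I.
  - destruct Wf as [Uf Vf]. split; [exact (IHU f g Uf Hle)|exact (IHV f g Vf Hle)].
  - destruct Wf as [U [FU Uf]]. exists U; split; [exact FU|exact (IHF U FU f g Uf Hle)].
  - apply HUV. apply (IH f g); [apply HUV; exact Wf|exact Hle].
Qed.

Lemma spec_le_isbell {X Y} (OX : (X -> Prop) -> Prop) (OY : (Y -> Prop) -> Prop)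
    (f g : cmap OX OY) :
  (forall x, spec_le OY (proj1_sig f x) (proj1_sig g x)) ->
  spec_le (isbell_open OX OY) f g.
Proof. intros Hle W HW Wf; exact (isbell_open_upper OX OY W HW f g Wf Hle). Qed.

Lemma Sigma2_open_up P : (forall x y, P x -> le2 x y -> P y) -> Sigma2_open P.
Proof.
  intros Hup. split; [exact Hup|].
  intros D s [[d0 Dd0] _] [_ Hleast] Ps. destruct s.
  - destruct (classic (D true)) as [Dt|nDt]; [exists true; auto|].
    exfalso. assert (Hc : le2 true false).
    { apply Hleast. intros [|] Dd; [contradiction|reflexivity]. }
    discriminate Hc.
  - exists d0. split; [exact Dd0|]. apply Hup with false; [exact Ps|reflexivity].
Qed.

Lemma Sigma2_open_union (F : (bool -> Prop) -> Prop) :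
  (forall U, F U -> Sigma2_open U) -> Sigma2_open (fun x => exists U, F U /\ U x).
Proof. exact (scott_open_union le2 F). Qed.

Lemma SigmaN_open_ge n : SigmaN_open (fun k => n <= k).
Proof.
  split; [intros; lia|].
  intros D s [[d0 Dd0] _] [_ Hleast] Hns.
  destruct (classic (exists d, D d /\ n <= d)) as [Hd|Hnd]; [exact Hd|].
  exfalso. destruct n as [|n]; [apply Hnd; exists d0; split; [exact Dd0|lia]|].
  assert (s <= n); [|lia].
  apply Hleast. intros d Dd. destruct (le_lt_dec (S n) d); [|lia].
  exfalso; apply Hnd; eauto.
Qed.

Notation Isbell := (isbell_open Sigma2_open SigmaN_open).

Lemma step_map_continuous a b : a <= b ->
  continuous Sigma2_open SigmaN_open (fun x : bool => if x then b else a).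
Proof.
  intros Hab V HV. apply Sigma2_open_up.
  intros [|] [|] Vx Hxy; try exact Vx; try discriminate.
  exact (scott_open_up le V a b HV Vx Hab).
Qed.

Definition step_map a b (Hab : a <= b) : cmap Sigma2_open SigmaN_open :=
  exist _ (fun x : bool => if x then b else a) (step_map_continuous a b Hab).

Lemma isbell_open_eval_ge (t : bool) n :
  Isbell (fun f : cmap Sigma2_open SigmaN_open => n <= proj1_sig f t).
Proof.
  exact (isbell_open_eval bool nat Sigma2_open SigmaN_open Sigma2_open_union t _
           (SigmaN_open_ge n)).
Qed.

Lemma KZ_isbell_ge_true n :
  KZ Isbell (fun f : cmap Sigma2_open SigmaN_open => n <= proj1_sig f true).
Proof.
  apply KZ_of_least with (step_map 0 n (Nat.le_0_l n)).
  - exact (le_n n).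
  - intros g Hg. apply spec_le_isbell. intros [|]; apply spec_le_scott; simpl; lia.
  - apply open_saturated, isbell_open_eval_ge.
Qed.

Lemma KZ_isbell_full : KZ Isbell (fun _ => True).
Proof.
  apply KZ_of_least with (step_map 0 0 (le_n 0)); [exact I| |intros x y _ _; exact I].
  intros g _. apply spec_le_isbell. intros [|]; apply spec_le_scott; simpl; lia.
Qed.

Lemma not_weak_well_filtered_isbell : ~ weak_well_filtered Isbell.
Proof.
  set (K := fun n (f : cmap Sigma2_open SigmaN_open) => n <= proj1_sig f true).
  intros Hw.
  destruct (Hw (fun L => exists n, L = K n)) with
    (U := fun f : cmap Sigma2_open SigmaN_open => 1 <= proj1_sig f false)
    as [L [[n ->] HKU]].
  - intros L [n ->]. apply KZ_isbell_ge_true.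
  - split; [exists (K 0), 0; reflexivity|].
    intros L1 L2 [n ->] [m ->]. exists (K (max n m)).
    split; [exists (max n m); reflexivity|]. unfold K; split; intros f; lia.
  - apply isbell_open_eval_ge.
  - exists (step_map 1 1 (le_n 1)). simpl; lia.
  - intros f Hf. exfalso.
    specialize (Hf (K (S (proj1_sig f true))) (ex_intro _ _ eq_refl)).
    unfold K in Hf; lia.
  - specialize (HKU (step_map 0 n (Nat.le_0_l n)) (le_n n)). simpl in HKU. lia.
Qed.

Lemma filtered_fam_nat_below (Fam : (nat -> Prop) -> Prop) : filtered_fam Fam ->
  forall n, exists K, Fam K /\
    forall x, x < n -> K x -> forall K', Fam K' -> K' x.
Proof.
  intros [[K0 FK0] Hdir] n. induction n as [|n [K [FK HK]]].
  { exists K0; split; [exact FK0|]. intros; lia. }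
  destruct (classic (forall K', Fam K' -> K' n)) as [Hall|Hnot].
  - exists K; split; [exact FK|]. intros x Hx Kx.
    destruct (Nat.eq_dec x n) as [->|Hne]; [exact Hall|]. apply HK; [lia|exact Kx].
  - apply not_all_ex_not in Hnot. destruct Hnot as [K' HK'].
    apply imply_to_and in HK'. destruct HK' as [FK' nK'n].
    destruct (Hdir K K' FK FK') as [K3 [FK3 [H31 H32]]].
    exists K3; split; [exact FK3|]. intros x Hx K3x.
    destruct (Nat.eq_dec x n) as [->|Hne]; [exfalso; exact (nK'n (H32 n K3x))|].
    apply HK; [lia|exact (H31 x K3x)].
Qed.

Lemma SigmaN_S_star_well_filtered : S_star_well_filtered SigmaN_open.
Proof.
  intros Fam _ Hf G _ U HU [u Uu] Hint.
  destruct (filtered_fam_nat_below Fam Hf u) as [K [FK HK]].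
  exists K; split; [exact FK|]. intros x Kx Gx.
  destruct (Nat.lt_ge_cases x u) as [Hlt|Hge].
  - exact (Hint x (HK x Hlt Kx) Gx).
  - exact (scott_open_up le U u x HU Uu Hge).
Qed.

Theorem mainTheorem19 :
  S_star_well_filtered SigmaN_open /\
  ~ weak_well_filtered (isbell_open Sigma2_open SigmaN_open) /\
  ~ S_star_well_filtered (isbell_open Sigma2_open SigmaN_open).
Proof.
  split; [exact SigmaN_S_star_well_filtered|].
  split; [exact not_weak_well_filtered_isbell|].
  intros Hs. apply not_weak_well_filtered_isbell.
  exact (S_star_well_filtered_weak Isbell KZ_isbell_full Hs).
Qed.
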